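(* Let $\phi(z)\in\mathbb{R}[z]$ be a cubic polynomial with positive lead coefficient $a>0$ and at least two distinct fixed points. Denote its fixed points by $\gamma_1,\gamma_2,\gamma_3\in\mathbb{R}$ with $\gamma_1\leq\gamma_2\leq\gamma_3$. Then $\mathfrak{K}_\infty\cap\mathbb{R}\subseteq[\gamma_1,\gamma_3]$, and $$\phi^{-1}([\gamma_1,\gamma_3])\subseteq[\gamma_1,\gamma_1+a^{-1/2}]\cup[\gamma_2-a^{-1/2},\gamma_2+a^{-1/2}]\cup[\gamma_3-a^{-1/2},\gamma_3].$$
   Context: The (archimedean) filled Julia set of $\phi$ is $\mathfrak{K}_\infty=\{x\in\mathbb{C}:\{|\phi^n(x)|:n\ge0\}\text{ is bounded}\}$, where $\phi^n$ is the $n$-th iterate of $\phi$. Fixed points are listed with multiplicity as roots of $\phi(z)-z$; here $\phi^{-1}([\gamma_1,\gamma_3])$ denotes the set of real $x$ with $\phi(x)\in[\gamma_1,\gamma_3]$. *)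

From HB Require Import structures.
From mathcomp Require Import all_boot all_order all_algebra.
From mathcomp Require Import reals.
From mathcomp Require Import complex.
Set Implicit Arguments. Unset Strict Implicit. Unset Printing Implicit Defensive.
Import Order.TTheory GRing.Theory Num.Theory.
Local Open Scope ring_scope.
Local Open Scope complex_scope.

Definition filled_julia (R : realType) (phi : {poly R}) (x : complex R) : Prop :=
  exists M : R, forall n : nat,
      `|iter n (fun w => (map_poly (fun c : R => c%:C) phi).[w]) x| <= M%:C.

(* Write phi(y) = y + f(y) with f(y) = a (y - g1)(y - g2)(y - g3).  Beyond g3
   the displacement f is positive and nondecreasing, so a real orbit starting
   there moves right by at least f(x) at every step and is unbounded; below g1
   symmetrically.  For the second claim, phi(x) in [g1, g3] forces x into
   [g1, g3].  If x stayed r = a^(-1/2) away from both g1 and g2 while lying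
   between them, then a (x - g1)(g2 - x) > a r^2 = 1 and so
   f(x) > g3 - x, i.e. phi(x) > g3; between g2 and g3 the mirror argument
   gives phi(x) < g1. *)

From HB Require Import structures.
From mathcomp Require Import all_boot all_order all_algebra.
From mathcomp Require Import reals complex.
From mathcomp Require Import ring lra.
Set Implicit Arguments. Unset Strict Implicit. Unset Printing Implicit Defensive.
Import Order.TTheory GRing.Theory Num.Theory.
Local Open Scope ring_scope.
Local Open Scope complex_scope.

Section RealOrbits.
Variable R : realType.
Implicit Types (h : R -> R) (x d M : R).

Lemma normc_real x : `|x%:C| = `|x|%:C.
Proof. by rewrite normc_def /= expr0n /= addr0 sqrtr_sqr. Qed.

Lemma iter_horner_map_real (phi : {poly R}) x n :
  iter n (fun w => (map_poly (fun c : R => c%:C) phi).[w]) x%:C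
  = (iter n (horner phi) x)%:C.
Proof. by elim: n => //= n ->; rewrite (horner_map (real_complex R)). Qed.

Lemma filled_julia_real (phi : {poly R}) x :
  filled_julia phi x%:C -> exists M, forall n, `|iter n (horner phi) x| <= M.
Proof.
by case=> M bounded; exists M => n; rewrite -lecR -normc_real -iter_horner_map_real.
Qed.

Lemma iter_drift_ge h x d :
  (forall y, x <= y -> y + d <= h y) -> 0 <= d ->
  forall n, x + n%:R * d <= iter n h x.
Proof.
move=> drift d_ge0; elim=> [|n IH] /=; first by rewrite mul0r addr0.
have n_ge0 : 0 <= n%:R * d by rewrite mulr_ge0.
have := drift (iter n h x); rewrite mulrSr; lra.
Qed.

Lemma linear_growth_unbounded x d M :
  0 < d -> ~ (forall n : nat, x + n%:R * d <= M).
Proof.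
move=> d_gt0 bounded.
have q_ge0 : 0 <= (M - x) / d by apply: divr_ge0; have := bounded 0%N; lra.
have := archi_boundP q_ge0; rewrite ltr_pdivrMr //.
have := bounded (Num.Def.archi_bound ((M - x) / d)); lra.
Qed.

Lemma escape_pinfty h x d :
  0 < d -> (forall y, x <= y -> y + d <= h y) ->
  ~ exists M, forall n, `|iter n h x| <= M.
Proof.
move=> d_gt0 drift [M bounded].
apply: (linear_growth_unbounded (x := x) (M := M) d_gt0) => n.
have := iter_drift_ge drift (ltW d_gt0) n; have := bounded n; rewrite ler_norml; lra.
Qed.

Lemma iter_conj_opp h x n :
  iter n (fun y => - h (- y)) (- x) = - iter n h x.
Proof. by elim: n => //= n ->; rewrite opprK. Qed.

Lemma escape_minfty h x d :
  0 < d -> (forall y, y <= x -> h y <= y - d) ->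
  ~ exists M, forall n, `|iter n h x| <= M.
Proof.
move=> d_gt0 drift [M bounded].
apply: (@escape_pinfty (fun y => - h (- y)) (- x) _ d_gt0) => [y le_xy | ].
  by have := drift (- y); lra.
by exists M => n; rewrite iter_conj_opp normrN.
Qed.

End RealOrbits.

Lemma invsqrt_lt_mul_gt1 (R : rcfType) (a u v : R) :
  0 < a -> (Num.sqrt a)^-1 < u -> (Num.sqrt a)^-1 < v -> 1 < a * (u * v).
Proof.
set r := _^-1 => a_gt0 ru rv.
have r_gt0 : 0 < r by rewrite invr_gt0 sqrtr_gt0.
have <- : a * (r * r) = 1.
  by rewrite -invfM -expr2 sqr_sqrtr ?mulfV ?gt_eqF ?ltW.
by rewrite ltr_pM2l // ltr_pM // ltW.
Qed.

Section Cubic.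
Variables (R : rcfType) (a g1 g2 g3 : R).
Hypotheses (a_gt0 : 0 < a) (g12 : g1 <= g2) (g23 : g2 <= g3).

Definition cubic (y : R) := a * (y - g1) * (y - g2) * (y - g3).

Let r := (Num.sqrt a)^-1.

Let r_gt0 : 0 < r. Proof. by rewrite invr_gt0 sqrtr_gt0. Qed.

(* [lra] does not look at section hypotheses, so they are passed explicitly. *)
Local Ltac lra_cubic := move: (a_gt0) (g12) (g23) (r_gt0) => *; lra.

Lemma cubic_gt0 y : g3 < y -> 0 < cubic y.
Proof. by move=> lt3y; rewrite /cubic !mulr_gt0 //; lra_cubic. Qed.

Lemma cubic_lt0 y : y < g1 -> cubic y < 0.
Proof.
move=> lty1; have -> : cubic y = - (a * (g1 - y) * (g2 - y) * (g3 - y)).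
  by rewrite /cubic; ring.
by rewrite oppr_lt0 !mulr_gt0 //; lra_cubic.
Qed.

Lemma cubic_le_above y z : g3 <= y -> y <= z -> cubic y <= cubic z.
Proof.
by move=> le3y leyz; rewrite /cubic; repeat apply: ler_pM; rewrite ?mulr_ge0 //; lra_cubic.
Qed.

Lemma cubic_le_below y z : z <= y -> y <= g1 -> cubic z <= cubic y.
Proof.
move=> lezy ley1; rewrite -lerN2.
have E w : - cubic w = a * (g1 - w) * (g2 - w) * (g3 - w) by rewrite /cubic; ring.
by rewrite !E; repeat apply: ler_pM; rewrite ?mulr_ge0 //; lra_cubic.
Qed.

Lemma cubic_gt_left_gap x : g1 + r < x -> x < g2 - r -> g3 - x < cubic x.
Proof.
move=> lt1x ltx2.
have big : 1 < a * ((x - g1) * (g2 - x)) by apply: invsqrt_lt_mul_gt1; fold r; lra_cubic.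
have -> : cubic x = (g3 - x) * (a * ((x - g1) * (g2 - x))) by rewrite /cubic; ring.
by rewrite -[ltLHS]mulr1 ltr_pM2l //; lra_cubic.
Qed.

Lemma cubic_lt_right_gap x : g2 + r < x -> x < g3 - r -> cubic x < g1 - x.
Proof.
move=> lt2x ltx3.
have big : 1 < a * ((x - g2) * (g3 - x)) by apply: invsqrt_lt_mul_gt1; fold r; lra_cubic.
have -> : cubic x = - ((x - g1) * (a * ((x - g2) * (g3 - x)))) by rewrite /cubic; ring.
by rewrite ltrNl opprB -[ltLHS]mulr1 ltr_pM2l //; lra_cubic.
Qed.

Lemma near_root_of_displaced_in_hull x :
  g1 <= x + cubic x <= g3 ->
  (g1 <= x <= g1 + r) \/ (g2 - r <= x <= g2 + r) \/ (g3 - r <= x <= g3).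
Proof.
case/andP=> lo hi.
have le1x : g1 <= x by rewrite leNgt; apply/negP => out; have := cubic_lt0 out; lra_cubic.
have lex3 : x <= g3 by rewrite leNgt; apply/negP => out; have := cubic_gt0 out; lra_cubic.
case: (lerP x (g1 + r)) => [? | lt1x]; first by left; apply/andP.
case: (lerP (g3 - r) x) => [? | ltx3]; first by right; right; apply/andP.
right; left; case: (lerP (g2 - r) x) => [le2x | ltx2].
  case: (lerP x (g2 + r)) => [? | lt2x]; first by apply/andP.
  by have := cubic_lt_right_gap lt2x ltx3; lra_cubic.
by have := cubic_gt_left_gap lt1x ltx2; lra_cubic.
Qed.

End Cubic.

Theorem lemma4p10 (R : realType) (phi : {poly R}) (g1 g2 g3 : R) :
  size phi = 4%N ->
  0 < lead_coef phi ->
  phi - 'X = (lead_coef phi)%:P * ('X - g1%:P) * ('X - g2%:P) * ('X - g3%:P) ->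
  g1 <= g2 -> g2 <= g3 ->
  g1 < g3 ->
  (forall x : R, filled_julia phi x%:C -> g1 <= x <= g3) /\
  (forall x : R, g1 <= phi.[x] <= g3 ->
     let r := (Num.sqrt (lead_coef phi))^-1 in
     (g1 <= x <= g1 + r) \/ (g2 - r <= x <= g2 + r) \/ (g3 - r <= x <= g3)).
Proof.
move=> _ a_gt0 phiE g12 g23 _; set a := lead_coef phi in a_gt0 phiE *.
have phi_cubic y : phi.[y] = y + cubic a g1 g2 g3 y.
  by have := congr1 (horner^~ y) phiE; rewrite !hornerE /cubic => <-; ring.
split=> [x /filled_julia_real bounded | x]; last first.
  by rewrite phi_cubic; apply: near_root_of_displaced_in_hull.
apply/andP; split; rewrite leNgt; apply/negP => out.
- apply: (escape_minfty (d := - cubic a g1 g2 g3 x) _ _ bounded).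
    by rewrite oppr_gt0 cubic_lt0.
  by move=> y le_yx; have := cubic_le_below a_gt0 g12 g23 le_yx (ltW out); rewrite phi_cubic; lra.
- apply: (escape_pinfty (d := cubic a g1 g2 g3 x) _ _ bounded); first exact: cubic_gt0.
  by move=> y le_xy; have := cubic_le_above a_gt0 g12 g23 (ltW out) le_xy; rewrite phi_cubic; lra.
Qed.
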